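(* If there is a $P$-counting module of data order $K$, then there is a $(\lambda n.\,2^{P(n)})$-counting module of data order $K+1$.
   Context: Types are built from a finite set $\mathcal{S}$ of sorts (containing $\mathsf{bool}$ and $\mathsf{list}$) by $\sigma ::= \iota \mid \sigma \times \tau \mid \sigma \Rightarrow \tau$. Type order: $\mathrm{ord}(\iota)=0$ for sorts, $\mathrm{ord}(\sigma\times\tau)=\max(\mathrm{ord}(\sigma),\mathrm{ord}(\tau))$, $\mathrm{ord}(\sigma\Rightarrow\tau)=\max(\mathrm{ord}(\sigma)+1,\mathrm{ord}(\tau))$. Constructors include $\mathsf{true},\mathsf{false}:\mathsf{bool}$, $[]:\mathsf{list}$ and infix $::\ :\mathsf{bool}\Rightarrow\mathsf{list}\Rightarrow\mathsf{list}$; constructors take arguments of order-$0$ types and return a sort. Syntax. Patterns: $\ell ::= x \mid c\,\ell_1\cdots\ell_m$ ($c$ a constructor). Expressions: $s ::= x \mid c \mid f \mid \mathsf{if}\ s_1\ \mathsf{then}\ s_2\ \mathsf{else}\ s_3 \mid \mathsf{choose}\ s_1\cdots s_n \mid (s,t) \mid s\,t$ ($f$ a defined symbol). Clauses have the form $f\,\ell_1\cdots\ell_k = s$; each lhs variable occurs once, rhs variables occur in the lhs, both sides are simply typed with a common type under some type environment $\Gamma$ for the lhs variables, constructors are fully applied, and all clauses for $f$ have the same number $\mathrm{arity}(f)$ of arguments. Sub-expressions: $s \unrhd t$ iff $s = t$ or $s \rhd t$, where $(s_1,s_2)\rhd t$, $\mathsf{if}\ s_1\ \mathsf{then}\ s_2\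 \mathsf{else}\ s_3 \rhd t$ and $\mathsf{choose}\ s_1\cdots s_n\rhd t$ hold if $s_i \unrhd t$ for some $i$, and $s_1\,s_2 \rhd t$ holds if $s_1 \rhd t$ or $s_2 \unrhd t$. A clause $f\,\ell_1\cdots\ell_k=s$ is cons-free if every $t$ with $s\unrhd t$ of the form $c\,s_1\cdots s_m$ with $c$ a constructor is a data expression or satisfies $\ell_i\unrhd t$ for some $i$. A list of clauses has data order $K$ if all clauses can be typed with environments assigning every variable a type of order $\le K$. Semantics. Data expressions $d ::= c\,d_1\cdots d_m \mid (d,d')$; values $v ::= d \mid (v,w) \mid f\,v_1\cdots v_n$ with $n<\mathrm{arity}(f)$. For a list of clauses $p$, judgements $p,\gamma\vdash s\to w$ and $p\vdash^{\mathrm{call}} f\,v_1\cdots v_n\to w$ are derived by: $p,\gamma\vdash x\to\gamma(x)$; $p,\gamma\vdash f\to w$ if $p\vdash^{\mathrm{call}} f\to w$; $p,\gamma\vdash c\,s_1\cdots s_m\to c\,b_1\cdots b_m$ if $p,\gamma\vdash s_i\to b_i$; $p,\gamma\vdash(s,t)\to(v,w)$ if $s\to v$, $t\to w$; $p,\gamma\vdash\mathsf{choose}\ s_1\cdots s_n\to w$ if $p,\gamma\vdash s_i\to w$ for some $i$; $p,\gamma\vdash\mathsf{if}\ s_1\ \mathsf{then}\ s_2\ \mathsf{else}\ s_3\to w$ if $s_1\to\mathsf{true}$ and $s_2\to w$, or $s_1\to\mathsf{false}$ and $s_3\to w$; $p,\gamma\vdash s\,t\to w$ if $s\to f\,v_1\cdots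 v_n$, $t\to v_{n+1}$ and $p\vdash^{\mathrm{call}} f\,v_1\cdots v_{n+1}\to w$; $p\vdash^{\mathrm{call}} f\,v_1\cdots v_n\to f\,v_1\cdots v_n$ if $n<\mathrm{arity}(f)$; $p\vdash^{\mathrm{call}} f\,v_1\cdots v_k\to w$ if $p,\gamma\vdash s\to w$ where $f\,\ell_1\cdots\ell_k=s$ is the first clause of $p$ with $v_i=\ell_i\gamma$ for all $i$ for some $\gamma$ on the lhs variables. Counting modules. For $P:\mathbb{N}\to\mathbb{N}\setminus\{0\}$, a $P$-counting module is a tuple $(\alpha_\pi,\mathcal{D}_\pi,\mathcal{A}_\pi,[\![\cdot]\!]_\pi,p_\pi)$ where: $\alpha_\pi$ is a type; $\mathcal{D}_\pi$ is a set of fresh defined symbols containing $\mathsf{seed}_\pi:\mathsf{list}\Rightarrow\alpha_\pi$, $\mathsf{pred}_\pi:\mathsf{list}\Rightarrow\alpha_\pi\Rightarrow\alpha_\pi$, $\mathsf{zero}_\pi:\mathsf{list}\Rightarrow\alpha_\pi\Rightarrow\mathsf{bool}$; for each $n\in\mathbb{N}$, $\mathcal{A}^n_\pi$ is a set of values of type $\alpha_\pi$ built over the constructors and $\mathcal{D}_\pi$ and $[\![\cdot]\!]^n_\pi:\mathcal{A}^n_\pi\to\mathbb{N}$ is total; and $p_\pi$ is a list of cons-free clauses on the symbols of $\mathcal{D}_\pi$ such that for every boolean list $cs$ of length $n$: there is a unique value $v$ with $p_\pi\vdash^{\mathrm{call}}\mathsf{seed}_\pi\,cs\to v$, and it satisfies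 $v\in\mathcal{A}^n_\pi$, $[\![v]\!]^n_\pi=P(n)-1$; if $v\in\mathcal{A}^n_\pi$ with $[\![v]\!]^n_\pi=i>0$, there is a unique $w$ with $p_\pi\vdash^{\mathrm{call}}\mathsf{pred}_\pi\,cs\,v\to w$, and $w\in\mathcal{A}^n_\pi$, $[\![w]\!]^n_\pi=i-1$; and for $v\in\mathcal{A}^n_\pi$ with $[\![v]\!]^n_\pi=i$, $p_\pi\vdash^{\mathrm{call}}\mathsf{zero}_\pi\,cs\,v\to\mathsf{true}$ iff $i=0$, and $p_\pi\vdash^{\mathrm{call}}\mathsf{zero}_\pi\,cs\,v\to\mathsf{false}$ iff $i>0$. The module has data order $K$ if $p_\pi$ has data order $K$. *)

From Stdlib Require Import List Arith Lia.
Import ListNotations.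
Set Implicit Arguments.

Inductive ty (S : Type) : Type :=
| TSort : S -> ty S
| TProd : ty S -> ty S -> ty S
| TArr  : ty S -> ty S -> ty S.
Arguments TSort {S}. Arguments TProd {S}. Arguments TArr {S}.

Fixpoint ord {T} (t : ty T) : nat :=
  match t with
  | TSort _ => 0
  | TProd a b => Nat.max (ord a) (ord b)
  | TArr a b => Nat.max (Datatypes.S (ord a)) (ord b)
  end.

Record signature := Signature {
  sort : Type;
  sort_finite : exists l : list sort, forall s, In s l;
  sbool : sort;
  slist : sort;
  sbool_slist : sbool <> slist;
  con : Type;
  con_args : con -> list (ty sort);
  con_res  : con -> sort;
  con_args_ord0 : forall c t, In t (con_args c) -> ord t = 0;
  ctrue : con; cfalse : con; cnil : con; ccons : con;
  ctrue_ty  : con_args ctrue = [] /\ con_res ctrue = sbool;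
  cfalse_ty : con_args cfalse = [] /\ con_res cfalse = sbool;
  cnil_ty   : con_args cnil = [] /\ con_res cnil = slist;
  ccons_ty  : con_args ccons = [TSort sbool; TSort slist] /\ con_res ccons = slist;
  ctrue_cfalse : ctrue <> cfalse;
  cnil_ccons : cnil <> ccons
}.
Arguments con_args {s} c.
Arguments con_res {s} c.

Section Lang.
Variable Sg : signature.

Notation ty' := (ty (sort Sg)).
Definition tbool : ty' := TSort (sbool Sg).
Definition tlist : ty' := TSort (slist Sg).

(* Defined symbols: an unbounded supply of names for every type;
   a symbol carries its (simple) type. *)
Record fsym := FSym { fname : nat; fty : ty' }.

Inductive pat : Type :=
| PVar : nat -> pat
| PCons : con Sg -> list pat -> pat.

(* Constructor applications are represented fully applied (ECons). *)
Inductive expr : Type :=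
| EVar : nat -> expr
| ECons : con Sg -> list expr -> expr
| EFun : fsym -> expr
| EIf : expr -> expr -> expr -> expr
| EChoose : list expr -> expr
| EPair : expr -> expr -> expr
| EApp : expr -> expr -> expr.

Fixpoint pat2expr (l : pat) : expr :=
  match l with
  | PVar x => EVar x
  | PCons c ls => ECons c (map pat2expr ls)
  end.

Fixpoint pat_vars (l : pat) : list nat :=
  match l with
  | PVar x => [x]
  | PCons c ls => flat_map pat_vars ls
  end.

Inductive var_in : nat -> expr -> Prop :=
| VI_var x : var_in x (EVar x)
| VI_cons x c es e : In e es -> var_in x e -> var_in x (ECons c es)
| VI_if1 x a b c : var_in x a -> var_in x (EIf a b c)
| VI_if2 x a b c : var_in x b -> var_in x (EIf a b c)
| VI_if3 x a b c : var_in x c -> var_in x (EIf a b c)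
| VI_choose x es e : In e es -> var_in x e -> var_in x (EChoose es)
| VI_pair1 x a b : var_in x a -> var_in x (EPair a b)
| VI_pair2 x a b : var_in x b -> var_in x (EPair a b)
| VI_app1 x a b : var_in x a -> var_in x (EApp a b)
| VI_app2 x a b : var_in x b -> var_in x (EApp a b).

Inductive sym_in : fsym -> expr -> Prop :=
| SI_fun f : sym_in f (EFun f)
| SI_cons f c es e : In e es -> sym_in f e -> sym_in f (ECons c es)
| SI_if1 f a b c : sym_in f a -> sym_in f (EIf a b c)
| SI_if2 f a b c : sym_in f b -> sym_in f (EIf a b c)
| SI_if3 f a b c : sym_in f c -> sym_in f (EIf a b c)
| SI_choose f es e : In e es -> sym_in f e -> sym_in f (EChoose es)
| SI_pair1 f a b : sym_in f a -> sym_in f (EPair a b)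
| SI_pair2 f a b : sym_in f b -> sym_in f (EPair a b)
| SI_app1 f a b : sym_in f a -> sym_in f (EApp a b)
| SI_app2 f a b : sym_in f b -> sym_in f (EApp a b).

(* Strict sub-expression relation  s |> t  (constructor applications
   c s1 .. sm are curried applications, so c s1..sm |> t iff some si |>= t). *)
Inductive subs : expr -> expr -> Prop :=
| SB_pair1 a b t : a = t \/ subs a t -> subs (EPair a b) t
| SB_pair2 a b t : b = t \/ subs b t -> subs (EPair a b) t
| SB_if1 a b c t : a = t \/ subs a t -> subs (EIf a b c) t
| SB_if2 a b c t : b = t \/ subs b t -> subs (EIf a b c) t
| SB_if3 a b c t : c = t \/ subs c t -> subs (EIf a b c) t
| SB_choose es e t : In e es -> e = t \/ subs e t -> subs (EChoose es) t
| SB_app1 a b t : subs a t -> subs (EApp a b) t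
| SB_app2 a b t : b = t \/ subs b t -> subs (EApp a b) t
| SB_cons c es e t : In e es -> e = t \/ subs e t -> subs (ECons c es) t.

Definition sube (s t : expr) : Prop := s = t \/ subs s t.

Inductive is_data_expr : expr -> Prop :=
| DE_cons c es : Forall is_data_expr es -> is_data_expr (ECons c es)
| DE_pair a b : is_data_expr a -> is_data_expr b -> is_data_expr (EPair a b).

Definition tenv := nat -> ty'.

Inductive has_type (G : tenv) : expr -> ty' -> Prop :=
| T_var x : has_type G (EVar x) (G x)
| T_fun f : has_type G (EFun f) (fty f)
| T_cons (c : con Sg) es : Forall2 (has_type G) es (con_args c) ->
    has_type G (ECons c es) (TSort (con_res c))
| T_if a b c t : has_type G a tbool -> has_type G b t -> has_type G c t ->
    has_type G (EIf a b c) t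
| T_choose es t : Forall (fun e => has_type G e t) es -> has_type G (EChoose es) t
| T_pair a b s t : has_type G a s -> has_type G b t -> has_type G (EPair a b) (TProd s t)
| T_app a b s t : has_type G a (TArr s t) -> has_type G b s -> has_type G (EApp a b) t.

Record clause := Clause { chead : fsym; cpats : list pat; crhs : expr }.

Definition lhs_expr (cl : clause) : expr :=
  fold_left EApp (map pat2expr (cpats cl)) (EFun (chead cl)).

Definition lhs_vars (cl : clause) : list nat := flat_map pat_vars (cpats cl).

Definition clause_typed (G : tenv) (cl : clause) : Prop :=
  NoDup (lhs_vars cl) /\
  (forall x, var_in x (crhs cl) -> In x (lhs_vars cl)) /\
  exists t, has_type G (lhs_expr cl) t /\ has_type G (crhs cl) t.

Definition clause_wf (cl : clause) : Prop := exists G, clause_typed G cl.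

Definition cons_free_clause (cl : clause) : Prop :=
  forall t c es, sube (crhs cl) t -> t = ECons c es ->
    is_data_expr t \/ exists l, In l (cpats cl) /\ sube (pat2expr l) t.

Definition program := list clause.

Definition program_wf (p : program) : Prop :=
  (forall cl, In cl p -> clause_wf cl) /\
  (forall cl1 cl2, In cl1 p -> In cl2 p -> chead cl1 = chead cl2 ->
     length (cpats cl1) = length (cpats cl2)).

Definition cons_free (p : program) : Prop :=
  program_wf p /\ forall cl, In cl p -> cons_free_clause cl.

Definition data_order (p : program) (K : nat) : Prop :=
  forall cl, In cl p -> exists G, clause_typed G cl /\
    forall x, In x (lhs_vars cl) -> ord (G x) <= K.

(* "n < arity(f)": some (equivalently, by well-formedness, every)
   clause for f in p has more than n arguments. *)
Definition below_arity (p : program) (f : fsym) (n : nat) : Prop :=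
  exists cl, In cl p /\ chead cl = f /\ n < length (cpats cl).

Inductive val : Type :=
| VCons : con Sg -> list val -> val
| VPair : val -> val -> val
| VFun : fsym -> list val -> val.

Inductive is_data : val -> Prop :=
| D_cons c vs : Forall is_data vs -> is_data (VCons c vs)
| D_pair a b : is_data a -> is_data b -> is_data (VPair a b).

Inductive is_value (p : program) : val -> Prop :=
| V_data d : is_data d -> is_value p d
| V_pair a b : is_value p a -> is_value p b -> is_value p (VPair a b)
| V_fun f vs : Forall (is_value p) vs -> below_arity p f (length vs) ->
    is_value p (VFun f vs).

Fixpoint arrows (ts : list ty') (t : ty') : ty' :=
  match ts with [] => t | s :: ts => TArr s (arrows ts t) end.

Inductive val_type : val -> ty' -> Prop :=
| VT_cons (c : con Sg) vs : Forall2 val_type vs (con_args c) -> val_type (VCons c vs) (TSort (con_res c))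
| VT_pair a b s t : val_type a s -> val_type b t -> val_type (VPair a b) (TProd s t)
| VT_fun f vs ts t : fty f = arrows ts t -> Forall2 val_type vs ts ->
    val_type (VFun f vs) t.

Inductive vsym_in : fsym -> val -> Prop :=
| VS_cons f c vs v : In v vs -> vsym_in f v -> vsym_in f (VCons c vs)
| VS_pair1 f a b : vsym_in f a -> vsym_in f (VPair a b)
| VS_pair2 f a b : vsym_in f b -> vsym_in f (VPair a b)
| VS_fun f vs : vsym_in f (VFun f vs)
| VS_funarg f g vs v : In v vs -> vsym_in f v -> vsym_in f (VFun g vs).

Definition venv := nat -> val.

Fixpoint pat_subst (g : venv) (l : pat) : val :=
  match l with
  | PVar x => g x
  | PCons c ls => VCons c (map (pat_subst g) ls)
  end.

Definition clause_matches (cl : clause) (f : fsym) (vs : list val) (g : venv) : Prop :=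
  chead cl = f /\ vs = map (pat_subst g) (cpats cl).

Inductive eval (p : program) : venv -> expr -> val -> Prop :=
| E_var (g : venv) x : eval p g (EVar x) (g x)
| E_fun (g : venv) f w : call p f [] w -> eval p g (EFun f) w
| E_cons (g : venv) c es bs : Forall2 (eval p g) es bs -> eval p g (ECons c es) (VCons c bs)
| E_pair (g : venv) a b v w : eval p g a v -> eval p g b w -> eval p g (EPair a b) (VPair v w)
| E_choose (g : venv) es e w : In e es -> eval p g e w -> eval p g (EChoose es) w
| E_if_t (g : venv) a b c w : eval p g a (VCons (ctrue Sg) []) -> eval p g b w -> eval p g (EIf a b c) w
| E_if_f (g : venv) a b c w : eval p g a (VCons (cfalse Sg) []) -> eval p g c w -> eval p g (EIf a b c) w
| E_app (g : venv) a b f vs v w : eval p g a (VFun f vs) -> eval p g b v ->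
    call p f (vs ++ [v]) w -> eval p g (EApp a b) w
with call (p : program) : fsym -> list val -> val -> Prop :=
| C_partial f vs : below_arity p f (length vs) -> call p f vs (VFun f vs)
| C_clause f vs i cl g w :
    nth_error p i = Some cl ->
    clause_matches cl f vs g ->
    (forall j cl', j < i -> nth_error p j = Some cl' ->
        ~ exists g', clause_matches cl' f vs g') ->
    eval p g (crhs cl) w ->
    call p f vs w.

Definition enc_bool (b : bool) : val :=
  VCons (if b then ctrue Sg else cfalse Sg) [].

Fixpoint enc_list (cs : list bool) : val :=
  match cs with
  | [] => VCons (cnil Sg) []
  | b :: cs => VCons (ccons Sg) [enc_bool b; enc_list cs]
  end.

Record cmodule := CModule {
  m_alpha : ty';
  m_D : list fsym;
  m_seed : fsym; m_pred : fsym; m_zero : fsym;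
  m_A : nat -> val -> Prop;
  m_interp : nat -> val -> nat;
  m_prog : program
}.

Definition is_counting_module (P : nat -> nat) (m : cmodule) : Prop :=
  let p := m_prog m in
  In (m_seed m) (m_D m) /\ In (m_pred m) (m_D m) /\ In (m_zero m) (m_D m) /\
  fty (m_seed m) = TArr tlist (m_alpha m) /\
  fty (m_pred m) = TArr tlist (TArr (m_alpha m) (m_alpha m)) /\
  fty (m_zero m) = TArr tlist (TArr (m_alpha m) tbool) /\
  cons_free p /\
  (forall cl, In cl p -> In (chead cl) (m_D m) /\
     forall f, sym_in f (crhs cl) -> In f (m_D m)) /\
  (forall n v, m_A m n v ->
     is_value p v /\ val_type v (m_alpha m) /\
     forall f, vsym_in f v -> In f (m_D m)) /\
  (forall n cs, length cs = n ->
     (exists v, call p (m_seed m) [enc_list cs] v /\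
        (forall v', call p (m_seed m) [enc_list cs] v' -> v' = v) /\
        m_A m n v /\ m_interp m n v = P n - 1) /\
     (forall v, m_A m n v -> 0 < m_interp m n v ->
        exists w, call p (m_pred m) [enc_list cs; v] w /\
          (forall w', call p (m_pred m) [enc_list cs; v] w' -> w' = w) /\
          m_A m n w /\ m_interp m n w = m_interp m n v - 1) /\
     (forall v, m_A m n v ->
        (call p (m_zero m) [enc_list cs; v] (enc_bool true) <-> m_interp m n v = 0) /\
        (call p (m_zero m) [enc_list cs; v] (enc_bool false) <-> 0 < m_interp m n v))).

Definition module_data_order (m : cmodule) (K : nat) : Prop :=
  data_order (m_prog m) K.

End Lang.

(* A number below 2^P(n) is stored as its P(n) binary digits, namely as a
   function F : alpha -> bool that yields digit k on an old counter of value k;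
   as alpha has order at most K, F has order at most K + 1.  The new seed is
   the constant-true function, and the predecessor of F is the partial
   application [pow_pred cs F], which flips digit k exactly when all digits below
   k are zero.  Whether all digits up to position k are zero is computed by
   recursion along the old predecessor, and the new zero test asks this for
   k = P(n) - 1, i.e. from the old seed.  Only partial applications are ever
   built, so all new clauses are cons-free. *)

From Stdlib Require Import List Arith Lia Bool Classical.
Import ListNotations.
Set Implicit Arguments.

(** * Evaluation of programs *)

Section Semantics.
Variable Sg : signature.
Local Notation program := (program Sg).
Local Notation val := (val Sg).
Local Notation expr := (expr Sg).
Local Notation fsym := (fsym Sg).
Local Notation venv := (venv Sg).

Section MutualInduction.
Variables (p : program) (Pe : venv -> expr -> val -> Prop) (Pc : fsym -> list val -> val -> Prop).
Hypothesis case_var : forall g x, Pe g (EVar Sg x) (g x).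
Hypothesis case_fun : forall g f w, call p f [] w -> Pc f [] w -> Pe g (EFun f) w.
Hypothesis case_cons : forall g c es bs,
  Forall2 (fun e b => eval p g e b /\ Pe g e b) es bs -> Pe g (ECons c es) (VCons c bs).
Hypothesis case_pair : forall g a b v w,
  eval p g a v -> Pe g a v -> eval p g b w -> Pe g b w -> Pe g (EPair a b) (VPair v w).
Hypothesis case_choose : forall g es e w,
  In e es -> eval p g e w -> Pe g e w -> Pe g (EChoose es) w.
Hypothesis case_if_true : forall g a b c w,
  eval p g a (VCons (ctrue Sg) []) -> Pe g a (VCons (ctrue Sg) []) ->
  eval p g b w -> Pe g b w -> Pe g (EIf a b c) w.
Hypothesis case_if_false : forall g a b c w,
  eval p g a (VCons (cfalse Sg) []) -> Pe g a (VCons (cfalse Sg) []) ->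
  eval p g c w -> Pe g c w -> Pe g (EIf a b c) w.
Hypothesis case_app : forall g a b f vs v w,
  eval p g a (VFun f vs) -> Pe g a (VFun f vs) -> eval p g b v -> Pe g b v ->
  call p f (vs ++ [v]) w -> Pc f (vs ++ [v]) w -> Pe g (EApp a b) w.
Hypothesis case_partial : forall f vs, below_arity p f (length vs) -> Pc f vs (VFun f vs).
Hypothesis case_clause : forall f vs i cl g w,
  nth_error p i = Some cl -> clause_matches cl f vs g ->
  (forall j cl', j < i -> nth_error p j = Some cl' -> ~ exists g', clause_matches cl' f vs g') ->
  eval p g (crhs cl) w -> Pe g (crhs cl) w -> Pc f vs w.

Fixpoint eval_mut_ind g e w (H : eval p g e w) {struct H} : Pe g e w :=
  match H in eval _ g e w return Pe g e w with
  | E_var _ g x => case_var g x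
  | E_fun g H1 => case_fun g H1 (call_mut_ind H1)
  | E_cons c HF => case_cons c
      ((fix F es bs (HF : Forall2 (eval p _) es bs) :
          Forall2 (fun e b => eval p _ e b /\ Pe _ e b) es bs :=
         match HF with
         | Forall2_nil _ => Forall2_nil _
         | Forall2_cons _ _ H1 H2 => Forall2_cons _ _ (conj H1 (eval_mut_ind H1)) (F _ _ H2)
         end) _ _ HF)
  | E_pair H1 H2 => case_pair H1 (eval_mut_ind H1) H2 (eval_mut_ind H2)
  | E_choose es Hin H1 => case_choose es Hin H1 (eval_mut_ind H1)
  | E_if_t c H1 H2 => case_if_true c H1 (eval_mut_ind H1) H2 (eval_mut_ind H2)
  | E_if_f b H1 H2 => case_if_false b H1 (eval_mut_ind H1) H2 (eval_mut_ind H2)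
  | E_app H1 H2 H3 => case_app H1 (eval_mut_ind H1) H2 (eval_mut_ind H2) H3 (call_mut_ind H3)
  end
with call_mut_ind f vs w (H : call p f vs w) {struct H} : Pc f vs w :=
  match H in call _ f vs w return Pc f vs w with
  | C_partial vs Hb => case_partial vs Hb
  | C_clause H1 H2 H3 H4 => case_clause H1 H2 H3 H4 (eval_mut_ind H4)
  end.

Lemma eval_call_mut_ind :
  (forall g e w, eval p g e w -> Pe g e w) /\ (forall f vs w, call p f vs w -> Pc f vs w).
Proof. split; [exact eval_mut_ind | exact call_mut_ind]. Qed.

End MutualInduction.

Unset Strict Implicit.

Lemma eval_call_app_r (p q : program) :
  (forall g e w, eval p g e w -> eval (p ++ q) g e w) /\
  (forall f vs w, call p f vs w -> call (p ++ q) f vs w).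
Proof.
  apply eval_call_mut_ind; intros.
  - constructor.
  - constructor; auto.
  - constructor. induction H; constructor; tauto.
  - constructor; auto.
  - econstructor; eauto.
  - apply E_if_t; auto.
  - apply E_if_f; auto.
  - econstructor; eauto.
  - destruct H as (cl & Hin & Hh & Hlt). constructor. exists cl. rewrite in_app_iff. auto.
  - assert (Hi : i < length p) by (apply nth_error_Some; congruence).
    apply (C_clause (i := i) (cl := cl) (g := g)); auto.
    + rewrite nth_error_app1; auto.
    + intros j cl' Hj Hnj. rewrite nth_error_app1 in Hnj by lia. eauto.
Qed.

Definition val_over (D : list fsym) (v : val) : Prop := forall f, vsym_in f v -> In f D.
Definition expr_over (D : list fsym) (e : expr) : Prop := forall f, sym_in f e -> In f D.
Definition env_over (D : list fsym) (g : venv) (e : expr) : Prop :=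
  forall x, var_in x e -> val_over D (g x).

Lemma val_over_VCons D c vs : val_over D (VCons c vs) <-> Forall (val_over D) vs.
Proof.
  rewrite Forall_forall. split.
  - intros H v Hv f Hf. apply H. econstructor; eauto.
  - intros H f Hf. inversion Hf; subst. eapply H; eauto.
Qed.

Lemma val_over_VPair D a b : val_over D (VPair a b) <-> val_over D a /\ val_over D b.
Proof.
  split.
  - intros H; split; intros f Hf; apply H; [apply VS_pair1 | apply VS_pair2]; auto.
  - intros [Ha Hb] f Hf. inversion Hf; subst; auto.
Qed.

Lemma val_over_VFun D f vs : val_over D (VFun f vs) <-> In f D /\ Forall (val_over D) vs.
Proof.
  rewrite Forall_forall. split.
  - intros H. split; [apply H; constructor|]. intros v Hv h Hh. apply H. econstructor; eauto.
  - intros [Hf H] h Hh. inversion Hh; subst; auto. eapply H; eauto.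
Qed.

Lemma val_over_pat_subst D g l x :
  val_over D (pat_subst g l) -> In x (pat_vars l) -> val_over D (g x).
Proof.
  revert l. fix IH 1. intros [y | c ls] H Hx; simpl in *.
  - clear IH. destruct Hx as [<- | []]. exact H.
  - rewrite val_over_VCons, Forall_map, Forall_forall in H.
    apply in_flat_map in Hx. destruct Hx as (l & Hl & Hx).
    clear - IH H Hl Hx. induction ls as [|l' ls IHls]; [destruct Hl|].
    destruct Hl as [<- | Hl]; [apply (IH l'); auto; apply H; left; auto|].
    apply IHls; auto. intros; apply H; right; auto.
Qed.

Section FreshExtension.
Variables (p q : program) (D : list fsym).
Hypothesis p_over : forall cl, In cl p -> In (chead cl) D /\ expr_over D (crhs cl).
Hypothesis q_fresh : forall cl, In cl q -> ~ In (chead cl) D.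
Hypothesis p_rhs_vars : forall cl, In cl p -> forall x, var_in x (crhs cl) -> In x (lhs_vars cl).

Lemma app_fresh_index i cl : nth_error (p ++ q) i = Some cl -> In (chead cl) D -> i < length p.
Proof.
  intros Hnth Hh. destruct (Nat.lt_ge_cases i (length p)) as [| Hge]; auto. exfalso.
  rewrite nth_error_app2 in Hnth by exact Hge. exact (q_fresh (nth_error_In _ _ Hnth) Hh).
Qed.

Lemma env_over_matching cl g :
  In cl p -> Forall (val_over D) (map (pat_subst g) (cpats cl)) -> env_over D g (crhs cl).
Proof.
  intros Hin Hargs x Hx. apply p_rhs_vars, in_flat_map in Hx as (l & Hl & Hx); auto.
  rewrite Forall_map, Forall_forall in Hargs. eapply val_over_pat_subst; eauto.
Qed.

Local Hint Constructors sym_in var_in : over.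
Local Ltac over_sub H := intros ? ?; apply H; eauto with over.

Lemma eval_call_app_fresh_inv :
  (forall g e w, eval (p ++ q) g e w ->
     expr_over D e -> env_over D g e -> eval p g e w /\ val_over D w) /\
  (forall f vs w, call (p ++ q) f vs w ->
     In f D -> Forall (val_over D) vs -> call p f vs w /\ val_over D w).
Proof.
  apply eval_call_mut_ind.
  - intros g x _ Hx. split; [constructor | apply Hx; constructor].
  - intros g f w _ IH Hs _. destruct IH as [Hc Hw]; [apply Hs; constructor | constructor |].
    split; [constructor |]; auto.
  - intros g c es bs Hes Hs Hx.
    enough (Forall2 (eval p g) es bs /\ Forall (val_over D) bs) as [Hev Hw]
      by (split; [constructor | apply val_over_VCons]; auto).
    assert (Hs' : forall e, In e es -> expr_over D e) by (intros e He f Hf; apply Hs; eauto with over).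
    assert (Hx' : forall e, In e es -> env_over D g e) by (intros e He x Hy; apply Hx; eauto with over).
    clear Hs Hx. induction Hes as [|e b es bs [_ IHe] _ IH]; [split; constructor|].
    destruct IHe as [Hb Hbo]; [apply Hs'; simpl; auto | apply Hx'; simpl; auto |].
    destruct IH as [Hbs Hbso]; [intros; apply Hs'; simpl; auto | intros; apply Hx'; simpl; auto |].
    split; constructor; auto.
  - intros g a b v w _ IHa _ IHb Hs Hx.
    destruct IHa as [Ha Hv]; [over_sub Hs | over_sub Hx |].
    destruct IHb as [Hb Hw]; [over_sub Hs | over_sub Hx |].
    split; [constructor | apply val_over_VPair]; auto.
  - intros g es e w Hin _ IH Hs Hx.
    destruct IH as [He Hw]; [over_sub Hs | over_sub Hx |]. split; [econstructor |]; eauto.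
  - intros g a b c w _ IHa _ IHb Hs Hx.
    destruct IHa as [Ha _]; [over_sub Hs | over_sub Hx |].
    destruct IHb as [Hb Hw]; [over_sub Hs | over_sub Hx |]. split; [apply E_if_t |]; auto.
  - intros g a b c w _ IHa _ IHc Hs Hx.
    destruct IHa as [Ha _]; [over_sub Hs | over_sub Hx |].
    destruct IHc as [Hc Hw]; [over_sub Hs | over_sub Hx |]. split; [apply E_if_f |]; auto.
  - intros g a b f vs v w _ IHa _ IHb _ IHc Hs Hx.
    destruct IHa as [Ha Hf]; [over_sub Hs | over_sub Hx |].
    destruct IHb as [Hb Hv]; [over_sub Hs | over_sub Hx |].
    apply val_over_VFun in Hf as [Hf Hvs].
    destruct IHc as [Hc Hw]; [exact Hf | apply Forall_app; auto |].
    split; [econstructor |]; eauto.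
  - intros f vs (cl & Hin & Hh & Hlt) Hf Hvs. apply in_app_iff in Hin as [Hin | Hin].
    + split; [constructor; exists cl; auto | apply val_over_VFun; auto].
    + exfalso. apply (q_fresh Hin). congruence.
  - intros f vs i cl g w Hnth [Hh Hvs] Hfirst _ IH Hf Hargs. subst f vs.
    pose proof (app_fresh_index Hnth Hf) as Hi.
    rewrite nth_error_app1 in Hnth by exact Hi.
    pose proof (nth_error_In _ _ Hnth) as Hin.
    destruct IH as [Hev Hw]; [apply p_over; auto | apply env_over_matching; auto |].
    split; auto. apply (C_clause (i := i) (cl := cl) (g := g)); [exact Hnth | split; auto | | exact Hev].
    intros j cl' Hj Hnj. apply (Hfirst j); auto. rewrite nth_error_app1; auto. lia.
Qed.

End FreshExtension.

Corollary call_app_fresh_iff p q D f vs w :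
  (forall cl, In cl p -> In (chead cl) D /\ expr_over D (crhs cl)) ->
  (forall cl, In cl q -> ~ In (chead cl) D) ->
  program_wf p -> In f D -> Forall (val_over D) vs ->
  (call (p ++ q) f vs w <-> call p f vs w).
Proof.
  intros Hp Hq [Hwf _] Hf Hvs. split.
  - intros H. refine (proj1 (proj2 (@eval_call_app_fresh_inv p q D Hp Hq _) f vs w H Hf Hvs)).
    intros cl Hin. destruct (Hwf cl Hin) as (G & _ & Hvars & _). exact Hvars.
  - apply eval_call_app_r.
Qed.

Definition arity_ge (p : program) (f : fsym) (k : nat) : Prop :=
  exists cl, In cl p /\ chead cl = f /\ k <= length (cpats cl).

Lemma call_arity_ge p f vs w : call p f vs w -> arity_ge p f (length vs).
Proof.
  intros H. inversion H as [? ? (cl & Hin & Hh & Hlt) | ? ? i cl g ? Hnth [Hh Hvs]]; subst.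
  - exists cl. repeat split; auto. lia.
  - exists cl. split; [eapply nth_error_In; eauto | rewrite length_map; auto].
Qed.

Lemma call_partial_iff p f k vs w :
  program_wf p -> arity_ge p f k -> length vs < k -> (call p f vs w <-> w = VFun f vs).
Proof.
  intros [_ Hlen] (cl & Hin & Hh & Hk) Hvs. split.
  - intros H. inversion H as [| ? ? i cl' g ? Hnth [Hh' Hm]]; subst; auto.
    rewrite length_map, (Hlen cl' cl (nth_error_In _ _ Hnth) Hin) in Hvs by congruence. lia.
  - intros ->. constructor. exists cl. repeat split; auto. lia.
Qed.

Lemma eval_var_iff p g x w : eval p g (EVar Sg x) w <-> w = g x.
Proof. split; [intros H; inversion H; auto | intros ->; constructor]. Qed.

Lemma eval_app_iff (p : program) g a b w :
  eval p g (EApp a b) w <->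
  exists f vs v, eval p g a (VFun f vs) /\ eval p g b v /\ call p f (vs ++ [v]) w.
Proof.
  split.
  - intros H. inversion H; subst. eauto 7.
  - intros (f & vs & v & Ha & Hb & Hc). econstructor; eauto.
Qed.

Definition apps (h : expr) (es : list expr) : expr := fold_left (@EApp Sg) es h.

Lemma eval_apps_fun p g f k es w :
  program_wf p -> arity_ge p f k -> length es <= k ->
  (eval p g (apps (EFun f) es) w <-> exists vs, Forall2 (eval p g) es vs /\ call p f vs w).
Proof.
  intros Hwf Har. revert w. induction es as [|e es IH] using rev_ind; intros w Hk.
  - split; [intros H; inversion H; eauto |].
    intros (vs & Hvs & Hc). inversion Hvs; subst. constructor. exact Hc.
  - rewrite length_app in Hk. simpl in Hk.
    unfold apps. rewrite fold_left_app. simpl. fold (apps (EFun f) es).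
    rewrite eval_app_iff. split.
    + intros (h & us & v & Hh & He & Hc). apply IH in Hh as (vs & Hvs & Hcall); [|lia].
      apply (call_partial_iff _ Hwf Har) in Hcall; [|rewrite <- (Forall2_length Hvs); lia].
      injection Hcall as -> ->. exists (vs ++ [v]). split; auto. apply Forall2_app; auto.
    + intros (vs' & Hvs' & Hc). apply Forall2_app_inv_l in Hvs' as (vs & v & Hvs & Hv & ->).
      inversion Hv as [| ? v' ? ? He Hnil]; inversion Hnil; subst.
      exists f, vs, v'. split; auto. apply IH; [lia|]. exists vs. split; auto.
      apply (call_partial_iff _ Hwf Har); auto. rewrite <- (Forall2_length Hvs). lia.
Qed.

Lemma Forall2_eval_vars p g xs vs : Forall2 (eval p g) (map (EVar Sg) xs) vs <-> vs = map g xs.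
Proof.
  revert vs. induction xs as [|x xs IH]; intros vs; simpl.
  - split; [intros H; inversion H; auto | intros ->; constructor].
  - split.
    + intros H. inversion H as [| ? v ? vs' Hx Hxs]; subst.
      apply eval_var_iff in Hx. apply IH in Hxs. subst. reflexivity.
    + intros ->. constructor; [apply eval_var_iff | apply IH]; auto.
Qed.

Lemma eval_apps_vars_last p g f xs e w :
  program_wf p -> arity_ge p f (S (length xs)) ->
  (eval p g (apps (EFun f) (map (EVar Sg) xs ++ [e])) w <->
   exists v, eval p g e v /\ call p f (map g xs ++ [v]) w).
Proof.
  intros Hwf Har. rewrite (eval_apps_fun _ _ Hwf Har) by (rewrite length_app, length_map; simpl; lia).
  split.
  - intros (vs' & Hvs' & Hc). apply Forall2_app_inv_l in Hvs' as (vs & v & Hvs & Hv & ->).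
    inversion Hv as [| ? v' ? ? He Hnil]; inversion Hnil; subst.
    apply Forall2_eval_vars in Hvs. subst. eauto.
  - intros (v & He & Hc). exists (map g xs ++ [v]). split; auto.
    apply Forall2_app; [apply Forall2_eval_vars | constructor]; auto.
Qed.

Lemma call_sole_clause (p : program) cl vs w :
  In cl p -> (forall cl', In cl' p -> chead cl' = chead cl -> cl' = cl) ->
  length vs = length (cpats cl) ->
  (call p (chead cl) vs w <->
   exists g, vs = map (pat_subst g) (cpats cl) /\ eval p g (crhs cl) w).
Proof.
  intros Hin Hsole Hlen. split.
  - intros H. inversion H as [? ? (cl' & Hin' & Hh & Hlt) | ? ? i cl' g ? Hnth [Hh Hm] _ Hev]; subst.
    + rewrite (Hsole cl' Hin' Hh) in Hlt. lia.
    + rewrite (Hsole cl' (nth_error_In _ _ Hnth) Hh) in *. eauto.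
  - intros (g & Hvs & Hev). destruct (In_nth_error _ _ Hin) as [i Hi].
    induction i as [i IH] using lt_wf_ind.
    destruct (classic (exists j cl', j < i /\ nth_error p j = Some cl' /\
                         exists g', clause_matches cl' (chead cl) vs g'))
      as [(j & cl' & Hj & Hnj & _ & Hh & _) | Hfirst].
    + rewrite (Hsole cl' (nth_error_In _ _ Hnj) Hh) in Hnj. exact (IH j Hj Hnj).
    + apply (C_clause (i := i) (cl := cl) (g := g)); [exact Hi | split; auto | | exact Hev].
      intros j cl' Hj Hnj Hm. apply Hfirst. eauto.
Qed.

Lemma call_var_clause (p : program) cl xs vs w (Q : Prop) :
  In cl p -> (forall cl', In cl' p -> chead cl' = chead cl -> cl' = cl) ->
  cpats cl = map (@PVar Sg) xs -> (exists g, map g xs = vs) ->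
  (forall g, map g xs = vs -> (eval p g (crhs cl) w <-> Q)) ->
  (call p (chead cl) vs w <-> Q).
Proof.
  intros Hin Hsole Hpats [g0 Hg0] Hbody.
  assert (Hsubst : forall g, map (pat_subst g) (cpats cl) = map g xs)
    by (intros; rewrite Hpats, map_map; reflexivity).
  rewrite call_sole_clause by (rewrite ?Hpats, <- ?Hg0, ?length_map; auto).
  split.
  - intros (g & Hvs & Hev). rewrite Hsubst in Hvs. apply (Hbody g); auto.
  - intros HQ. exists g0. rewrite Hsubst. split; [auto | apply (Hbody g0 Hg0); exact HQ].
Qed.

Definition ebool (b : bool) : expr := ECons (if b then ctrue Sg else cfalse Sg) [].
Definition enot (e : expr) : expr := EIf e (ebool false) (ebool true).
Definition evals_bool (p : program) g e (x : bool) : Prop :=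
  forall y, eval p g e (enc_bool Sg y) <-> y = x.

Lemma enc_bool_inj (x y : bool) : enc_bool Sg x = enc_bool Sg y -> x = y.
Proof.
  destruct x, y; simpl; intros H; auto; injection H as E;
    [| symmetry in E]; contradiction (ctrue_cfalse Sg).
Qed.

Lemma eval_ebool_iff (p : program) g b w : eval p g (ebool b) w <-> w = enc_bool Sg b.
Proof.
  split; [intros H; inversion H as [| | ? ? ? ? Hnil | | | | |]; inversion Hnil; auto
         | intros ->; repeat constructor].
Qed.

Lemma evals_bool_intro (p : program) g e x :
  (forall w, eval p g e w <-> w = enc_bool Sg x) -> evals_bool p g e x.
Proof. intros H y. rewrite H. split; [apply enc_bool_inj | intros ->; auto]. Qed.

Lemma eval_if_iff (p : program) g a b c x w :
  evals_bool p g a x -> (eval p g (EIf a b c) w <-> eval p g (if x then b else c) w).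
Proof.
  intros Ha. split.
  - intros H. inversion H as [| | | | | ? ? ? ? ? Ht Hb | ? ? ? ? ? Hf Hc |]; subst.
    + apply (Ha true) in Ht. subst. exact Hb.
    + apply (Ha false) in Hf. subst. exact Hc.
  - destruct x; intros H; [apply E_if_t, H; apply (Ha true) | apply E_if_f, H; apply (Ha false)]; auto.
Qed.

Lemma eval_enot_iff (p : program) g e x w :
  evals_bool p g e x -> (eval p g (enot e) w <-> w = enc_bool Sg (negb x)).
Proof. intros He. unfold enot. rewrite (eval_if_iff _ _ _ He). destruct x; apply eval_ebool_iff. Qed.

Lemma val_over_enc_list D cs : val_over D (enc_list Sg cs).
Proof.
  induction cs as [|b cs IH]; simpl; apply val_over_VCons; repeat constructor; auto.
  apply val_over_VCons. constructor.
Qed.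

Lemma is_data_enc_list cs : is_data (enc_list Sg cs).
Proof. induction cs; simpl; repeat constructor; auto. Qed.

Lemma val_type_enc_bool b : val_type (enc_bool Sg b) (tbool Sg).
Proof.
  unfold tbool. destruct b; simpl;
    [destruct (ctrue_ty Sg) as [Ha Hr] | destruct (cfalse_ty Sg) as [Ha Hr]];
    rewrite <- Hr; constructor; rewrite Ha; constructor.
Qed.

Lemma val_type_enc_list cs : val_type (enc_list Sg cs) (tlist Sg).
Proof.
  unfold tlist. destruct (cnil_ty Sg) as [Ha0 Hr0], (ccons_ty Sg) as [Ha1 Hr1].
  induction cs as [|b cs IH]; simpl.
  - rewrite <- Hr0. constructor. rewrite Ha0. constructor.
  - rewrite <- Hr1. constructor. rewrite Ha1. repeat constructor; auto. apply val_type_enc_bool.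
Qed.

Lemma has_type_ebool G b : has_type G (ebool b) (tbool Sg).
Proof.
  unfold tbool. destruct b; simpl;
    [destruct (ctrue_ty Sg) as [Ha Hr] | destruct (cfalse_ty Sg) as [Ha Hr]];
    rewrite <- Hr; constructor; rewrite Ha; constructor.
Qed.

Lemma has_type_apps_inv G h es t :
  has_type G (apps h es) t -> exists ts, has_type G h (arrows Sg ts t) /\ Forall2 (has_type G) es ts.
Proof.
  revert h. induction es as [|e es IH]; intros h H; [exists []; auto|].
  destruct (IH _ H) as (ts & Hh & Hes). inversion Hh as [| | | | | | ? ? s ? Hh' He]; subst.
  exists (s :: ts). split; [exact Hh' | constructor; auto].
Qed.

Lemma pat_type_ord_le (G : tenv Sg) (l : pat Sg) t K :
  has_type G (pat2expr l) t -> (forall x, In x (pat_vars l) -> ord (G x) <= K) -> ord t <= K.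
Proof.
  destruct l as [x | c ls]; simpl; intros Ht Hvars; inversion Ht; subst; simpl; [|lia].
  apply Hvars. left. reflexivity.
Qed.

Lemma arity_ge_app_r (p q : program) f k : arity_ge p f k -> arity_ge (p ++ q) f k.
Proof. intros (cl & Hin & Hh & Hk). exists cl. rewrite in_app_iff. auto. Qed.

Definition apply_val (p : program) (F v w : val) : Prop :=
  exists f vs, F = VFun f vs /\ call p f (vs ++ [v]) w.

Lemma apply_val_VFun (p : program) f vs v w : apply_val p (VFun f vs) v w <-> call p f (vs ++ [v]) w.
Proof.
  split; [intros (f' & vs' & E & H); injection E as -> ->; exact H | intros H; exists f, vs; auto].
Qed.

Lemma eval_app_vars_iff (p : program) g x y w :
  eval p g (EApp (EVar Sg x) (EVar Sg y)) w <-> apply_val p (g x) (g y) w.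
Proof.
  rewrite eval_app_iff. split.
  - intros (f & vs & v & Hx & Hy & Hc). apply eval_var_iff in Hx, Hy. subst. exists f, vs. auto.
  - intros (f & vs & Hx & Hc). exists f, vs, (g y). rewrite !eval_var_iff. auto.
Qed.

Inductive plain_expr (xs : list nat) (fs : list fsym) : expr -> Prop :=
| PE_var x : In x xs -> plain_expr xs fs (EVar Sg x)
| PE_fun f : In f fs -> plain_expr xs fs (EFun f)
| PE_const c : plain_expr xs fs (ECons c [])
| PE_if a b c : plain_expr xs fs a -> plain_expr xs fs b -> plain_expr xs fs c ->
    plain_expr xs fs (EIf a b c)
| PE_app a b : plain_expr xs fs a -> plain_expr xs fs b -> plain_expr xs fs (EApp a b).

Lemma plain_expr_var_in xs fs e x : plain_expr xs fs e -> var_in x e -> In x xs.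
Proof. intros He Hx. induction Hx; inversion He; subst; auto; contradiction. Qed.

Lemma plain_expr_sym_in xs fs e f : plain_expr xs fs e -> sym_in f e -> In f fs.
Proof. intros He Hf. induction Hf; inversion He; subst; auto; contradiction. Qed.

Lemma plain_expr_subs xs fs e t : plain_expr xs fs e -> subs e t -> plain_expr xs fs t.
Proof.
  intros He. revert t. induction He; intros t Ht; inversion Ht; subst;
    repeat match goal with H : _ = _ \/ _ |- _ => destruct H as [<- | H] end;
    auto; contradiction.
Qed.

Lemma plain_expr_constructors_data xs fs e t :
  plain_expr xs fs e -> sube e t -> forall c es, t = ECons c es -> is_data_expr t.
Proof.
  intros He Hsub c es ->.
  assert (Ht : plain_expr xs fs (ECons c es))
    by (destruct Hsub as [<- | Hsub]; [|eapply plain_expr_subs]; eauto).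
  inversion Ht. repeat constructor.
Qed.

End Semantics.

(** * Little-endian binary numerals *)

Fixpoint bin_val (l : list bool) : nat :=
  match l with [] => 0 | b :: l => Nat.b2n b + 2 * bin_val l end.

Fixpoint bin_pred (l : list bool) : list bool :=
  match l with
  | [] => []
  | true :: l => false :: l
  | false :: l => true :: bin_pred l
  end.

Definition low_bits_zero (l : list bool) (k : nat) : bool := forallb negb (firstn k l).

Lemma bin_val_pred l : 0 < bin_val l -> bin_val (bin_pred l) = bin_val l - 1.
Proof. induction l as [|[|] l IH]; simpl; lia. Qed.

Lemma length_bin_pred l : length (bin_pred l) = length l.
Proof. induction l as [|[|] l IH]; simpl; auto. Qed.

Lemma bin_val_ones n : bin_val (repeat true n) = 2 ^ n - 1.
Proof. induction n as [|n IH]; simpl; auto. rewrite IH. pose proof (Nat.pow_nonzero 2 n). lia. Qed.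

Lemma low_bits_zero_S l k : low_bits_zero l (S k) = low_bits_zero l k && negb (nth k l false).
Proof.
  unfold low_bits_zero. revert k. induction l as [|b l IH]; intros [|k].
  - reflexivity.
  - destruct k; reflexivity.
  - destruct b; reflexivity.
  - rewrite !firstn_cons. cbn [forallb nth]. rewrite IH, andb_assoc. reflexivity.
Qed.

(* Subtracting one flips exactly the bits up to and including the lowest set bit. *)
Lemma nth_bin_pred l k : k < length l ->
  nth k (bin_pred l) false = if low_bits_zero l k then negb (nth k l false) else nth k l false.
Proof.
  unfold low_bits_zero. revert k. induction l as [|[|] l IH]; intros [|k] Hk; simpl in *; auto; try lia.
  apply IH. lia.
Qed.

Lemma low_bits_zero_length l : low_bits_zero l (length l) = (bin_val l =? 0).
Proof.
  unfold low_bits_zero. rewrite firstn_all.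
  induction l as [|[|] l IH]; simpl; auto. rewrite IH. destruct (bin_val l); reflexivity.
Qed.

(** * The counting module for 2^P *)

Section Doubling.
Variables (Sg : signature) (P : nat -> nat) (m : cmodule Sg).
Hypothesis P_pos : forall n, 0 < P n.
Hypothesis m_counting : is_counting_module P m.

Local Notation val := (val Sg).
Local Notation expr := (expr Sg).
Local Notation tl := (tlist Sg).
Local Notation tb := (tbool Sg).
Local Notation alpha := (m_alpha m).
Local Notation D := (m_D m).
Local Notation sd := (m_seed m).
Local Notation pr := (m_pred m).
Local Notation zr := (m_zero m).
Local Notation A := (m_A m).
Local Notation I := (m_interp m).
Local Notation p := (m_prog m).

Lemma old_syms_in_D : In sd D /\ In pr D /\ In zr D.
Proof. destruct m_counting as (? & ? & ? & _). auto. Qed.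

Lemma old_sym_types :
  fty sd = TArr tl alpha /\ fty pr = TArr tl (TArr alpha alpha) /\ fty zr = TArr tl (TArr alpha tb).
Proof. destruct m_counting as (_ & _ & _ & ? & ? & ? & _). auto. Qed.

Lemma old_cons_free : cons_free p.
Proof. destruct m_counting as (_ & _ & _ & _ & _ & _ & ? & _). auto. Qed.

Lemma old_clauses_over cl : In cl p -> In (chead cl) D /\ expr_over D (crhs cl).
Proof. destruct m_counting as (_ & _ & _ & _ & _ & _ & _ & ? & _). auto. Qed.

Lemma old_values_over n v : A n v -> val_over D v.
Proof.
  destruct m_counting as (_ & _ & _ & _ & _ & _ & _ & _ & H & _).
  intros Hv. exact (proj2 (proj2 (H n v Hv))).
Qed.

Lemma old_spec n cs : length cs = n ->
  (exists v, call p sd [enc_list Sg cs] v /\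
     (forall v', call p sd [enc_list Sg cs] v' -> v' = v) /\ A n v /\ I n v = P n - 1) /\
  (forall v, A n v -> 0 < I n v ->
     exists w, call p pr [enc_list Sg cs; v] w /\
       (forall w', call p pr [enc_list Sg cs; v] w' -> w' = w) /\ A n w /\ I n w = I n v - 1) /\
  (forall v, A n v ->
     (call p zr [enc_list Sg cs; v] (enc_bool Sg true) <-> I n v = 0) /\
     (call p zr [enc_list Sg cs; v] (enc_bool Sg false) <-> 0 < I n v)).
Proof. destruct m_counting as (_ & _ & _ & _ & _ & _ & _ & _ & _ & H). apply H. Qed.

Lemma old_zero_call n cs v : length cs = n -> A n v ->
  call p zr [enc_list Sg cs; v] (enc_bool Sg (I n v =? 0)).
Proof.
  intros Hcs Hv. destruct (old_spec Hcs) as (_ & _ & Hzero).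
  destruct (Hzero v Hv) as [[_ Htrue] [_ Hfalse]].
  destruct (Nat.eqb_spec (I n v) 0); [apply Htrue | apply Hfalse]; lia.
Qed.

Lemma old_arities : arity_ge p sd 1 /\ arity_ge p zr 2.
Proof.
  destruct (old_spec (cs := []) eq_refl) as ((v & Hseed & _ & Hv & _) & _).
  split; [exact (call_arity_ge Hseed) | exact (call_arity_ge (old_zero_call (cs := []) eq_refl Hv))].
Qed.

Definition fresh_base : nat := S (list_max (map (@fname Sg) D)).

Lemma fresh_not_in_D j t : fresh_base <= j -> ~ In (FSym Sg j t) D.
Proof.
  intros Hj Hin. apply (in_map (@fname Sg)) in Hin.
  pose proof (proj1 (list_max_le (map (@fname Sg) D) _) (le_n _)) as Hmax.
  rewrite Forall_forall in Hmax. specialize (Hmax _ Hin). unfold fresh_base in Hj. simpl in Hmax. lia.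
Qed.

Definition pow_alpha := TArr alpha tb.
Definition pow_seed := FSym Sg fresh_base (TArr tl pow_alpha).
Definition pow_pred := FSym Sg (fresh_base + 1) (TArr tl (TArr pow_alpha pow_alpha)).
Definition pow_low_zero := FSym Sg (fresh_base + 2) (TArr tl (TArr pow_alpha (TArr alpha tb))).
Definition pow_zero := FSym Sg (fresh_base + 3) (TArr tl (TArr pow_alpha tb)).

(* In the new clauses variable 0 holds the input list, 1 a bit vector of type
   [pow_alpha] and 2 a counter of the old module. *)
Definition read_bit : expr := EApp (EVar Sg 1) (EVar Sg 2).
Definition old_zero_at : expr := apps (EFun zr) (map (EVar Sg) [0; 2]).
Definition old_pred_at : expr := apps (EFun pr) (map (EVar Sg) [0; 2]).
Definition old_seed_at : expr := apps (EFun sd) (map (EVar Sg) [0]).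
Definition low_zero_at (e : expr) : expr := apps (EFun pow_low_zero) (map (EVar Sg) [0; 1] ++ [e]).

Definition pow_seed_clause := Clause pow_seed (map (PVar Sg) [0; 2]) (ebool Sg true).
Definition pow_pred_clause := Clause pow_pred (map (PVar Sg) [0; 1; 2])
  (EIf old_zero_at (enot read_bit) (EIf (low_zero_at old_pred_at) (enot read_bit) read_bit)).
Definition pow_low_zero_clause := Clause pow_low_zero (map (PVar Sg) [0; 1; 2])
  (EIf read_bit (ebool Sg false) (EIf old_zero_at (ebool Sg true) (low_zero_at old_pred_at))).
Definition pow_zero_clause := Clause pow_zero (map (PVar Sg) [0; 1]) (low_zero_at old_seed_at).

Definition pow_clauses := [pow_seed_clause; pow_pred_clause; pow_low_zero_clause; pow_zero_clause].
Definition pow_prog := p ++ pow_clauses.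
Definition pow_syms := [pow_seed; pow_pred; pow_low_zero; pow_zero].
Definition pow_D := D ++ pow_syms.

Local Ltac case_pow_clause H := destruct H as [<- | [<- | [<- | [<- | []]]]].

Lemma pow_clauses_fresh cl : In cl pow_clauses -> ~ In (chead cl) D.
Proof. intros H. case_pow_clause H; apply fresh_not_in_D; unfold fresh_base; lia. Qed.

Lemma pow_clauses_sole cl cl' :
  In cl pow_clauses -> In cl' pow_prog -> chead cl' = chead cl -> cl' = cl.
Proof.
  intros Hcl Hcl' Hh. apply in_app_iff in Hcl' as [Hold | Hnew].
  - exfalso. apply (pow_clauses_fresh Hcl). rewrite <- Hh. exact (proj1 (old_clauses_over Hold)).
  - case_pow_clause Hcl; case_pow_clause Hnew; auto; injection Hh; lia.
Qed.

Definition pow_tenv : tenv Sg := fun x => match x with 0 => tl | 1 => pow_alpha | _ => alpha end.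

Lemma pow_clauses_plain cl : In cl pow_clauses -> plain_expr (lhs_vars cl) pow_D (crhs cl).
Proof.
  destruct old_syms_in_D as (Hsd & Hpr & Hzr).
  assert (Hnew : forall f, In f pow_syms -> In f pow_D) by (intros; apply in_or_app; auto).
  assert (Hold : forall f, In f D -> In f pow_D) by (intros; apply in_or_app; auto).
  intros H. case_pow_clause H;
    unfold pow_seed_clause, pow_pred_clause, pow_low_zero_clause, pow_zero_clause,
      read_bit, old_zero_at, old_pred_at, old_seed_at, low_zero_at, enot, ebool, apps; simpl;
    repeat first [ apply PE_if | apply PE_app | apply PE_const | apply PE_var; simpl; tauto
                 | apply PE_fun; first [apply Hold; assumption | apply Hnew; simpl; tauto] ].
Qed.

Lemma has_type_old_syms G :
  has_type G (EFun sd) (TArr tl alpha) /\ has_type G (EFun pr) (TArr tl (TArr alpha alpha)) /\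
  has_type G (EFun zr) (TArr tl (TArr alpha tb)).
Proof.
  destruct old_sym_types as (Hsd & Hpr & Hzr). rewrite <- Hsd, <- Hpr, <- Hzr. repeat constructor.
Qed.

Local Ltac typecheck :=
  lazymatch goal with
  | |- has_type _ (EApp _ _) _ => eapply T_app; [typecheck | typecheck]
  | |- has_type _ (EIf _ _ _) _ => apply T_if; [typecheck | typecheck | typecheck]
  | |- has_type ?G (EVar _ ?x) _ => exact (T_var G x)
  | |- has_type _ (EFun sd) _ => apply has_type_old_syms
  | |- has_type _ (EFun pr) _ => apply has_type_old_syms
  | |- has_type _ (EFun zr) _ => apply has_type_old_syms
  | |- has_type _ (EFun ?f) _ => exact (T_fun _ f)
  | |- has_type _ (ebool _ _) _ => apply has_type_ebool
  end.

Lemma pow_clauses_typed cl : In cl pow_clauses -> clause_typed pow_tenv cl.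
Proof.
  intros H. split; [|split].
  - case_pow_clause H; repeat constructor; simpl; intuition discriminate.
  - intros x Hx. exact (plain_expr_var_in (pow_clauses_plain H) Hx).
  - exists tb. case_pow_clause H;
      unfold pow_seed_clause, pow_pred_clause, pow_low_zero_clause, pow_zero_clause, lhs_expr,
        read_bit, old_zero_at, old_pred_at, old_seed_at, low_zero_at, enot, apps; simpl;
      split; typecheck.
Qed.

Lemma pow_prog_wf : program_wf pow_prog.
Proof.
  destruct old_cons_free as [[Hwf Hlen] _]. split.
  - intros cl H. apply in_app_iff in H as [H | H]; [auto |].
    exists pow_tenv. apply pow_clauses_typed. exact H.
  - intros cl1 cl2 H1 H2 Hh.
    destruct (in_app_or _ _ _ H1) as [H1' | H1']; [destruct (in_app_or _ _ _ H2) as [H2' | H2']|].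
    + auto.
    + rewrite (pow_clauses_sole H2' H1 Hh). reflexivity.
    + rewrite (pow_clauses_sole H1' H2 (eq_sym Hh)). reflexivity.
Qed.

Lemma pow_prog_cons_free : cons_free pow_prog.
Proof.
  split; [exact pow_prog_wf|]. intros cl H. apply in_app_iff in H as [H | H].
  - apply old_cons_free; auto.
  - intros t c es Ht Hc. left. exact (plain_expr_constructors_data (pow_clauses_plain H) Ht Hc).
Qed.

(* The second argument of [zr] has type [alpha]; in the data-order typing of
   a clause for [zr] its pattern is a variable (order <= K) or a constructor
   pattern (then [alpha] is a sort). *)
Lemma old_alpha_ord K : data_order p K -> ord alpha <= K.
Proof.
  intros Hord. destruct old_arities as [_ (cl & Hin & Hh & Hlen)].
  destruct (Hord cl Hin) as (G & (_ & _ & t & Hlhs & _) & HK).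
  apply has_type_apps_inv in Hlhs as (ts & Hfun & Hpats).
  inversion Hfun as [| ? Hf Harr | | | | |].
  rewrite Hh, (proj2 (proj2 old_sym_types)) in Harr.
  destruct (cpats cl) as [|l1 [|l2 ls]] eqn:Hpats_cl; simpl in Hlen; try lia.
  inversion Hpats as [| ? t1 ? ts' _ Hrest]; subst.
  inversion Hrest as [| ? t2 ? ts'' Hl2 _]; subst.
  injection Harr as _ Ht2. subst t2.
  eapply pat_type_ord_le; [exact Hl2|]. intros x Hx. apply HK.
  unfold lhs_vars. rewrite Hpats_cl. simpl. apply in_or_app. right. apply in_or_app. left. exact Hx.
Qed.

Lemma pow_prog_data_order K : data_order p K -> data_order pow_prog (K + 1).
Proof.
  intros Hord cl H. apply in_app_iff in H as [H | H].
  - destruct (Hord cl H) as (G & Htyped & HK). exists G. split; auto.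
    intros x Hx. specialize (HK x Hx). lia.
  - exists pow_tenv. split; [apply pow_clauses_typed; auto|].
    pose proof (old_alpha_ord Hord). intros [|[|x]] _; simpl; lia.
Qed.

Lemma call_old_iff f vs w :
  In f D -> Forall (val_over D) vs -> (call pow_prog f vs w <-> call p f vs w).
Proof.
  intros Hf Hvs. apply call_app_fresh_iff with (D := D); auto.
  - exact old_clauses_over.
  - exact pow_clauses_fresh.
  - apply old_cons_free.
Qed.

Lemma eval_old_apps f xs g w :
  In f D -> arity_ge p f (length xs) -> Forall (val_over D) (map g xs) ->
  (eval pow_prog g (apps (EFun f) (map (EVar Sg) xs)) w <-> call p f (map g xs) w).
Proof.
  intros Hf Har Hxs.
  rewrite (eval_apps_fun _ _ pow_prog_wf (arity_ge_app_r _ Har)) by (rewrite length_map; auto).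
  rewrite <- call_old_iff by auto. split.
  - intros (vs & Hvs & Hc). apply Forall2_eval_vars in Hvs. subst. exact Hc.
  - intros Hc. exists (map g xs). rewrite Forall2_eval_vars. auto.
Qed.

Lemma call_pow_clause cl xs vs w (Q : Prop) :
  In cl pow_clauses -> cpats cl = map (PVar Sg) xs -> (exists g, map g xs = vs) ->
  (forall g, map g xs = vs -> (eval pow_prog g (crhs cl) w <-> Q)) ->
  (call pow_prog (chead cl) vs w <-> Q).
Proof.
  intros Hcl. apply call_var_clause; [apply in_or_app; auto | intros; eapply pow_clauses_sole; eauto].
Qed.

Lemma eval_low_zero_at g e w :
  eval pow_prog g (low_zero_at e) w <->
  exists v, eval pow_prog g e v /\ call pow_prog pow_low_zero [g 0; g 1; v] w.
Proof.
  apply eval_apps_vars_last; [exact pow_prog_wf|].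
  exists pow_low_zero_clause. repeat split; [apply in_or_app; right; simpl; tauto | auto].
Qed.

(* Meaningful only on values satisfying [pow_repr n]; the head symbol is not inspected. *)
Fixpoint bits (n : nat) (v : val) : list bool :=
  match v with
  | VFun _ [_; F] => bin_pred (bits n F)
  | _ => repeat true (P n)
  end.

Inductive pow_repr (n : nat) : val -> Prop :=
| pow_repr_seed cs : length cs = n -> pow_repr n (VFun pow_seed [enc_list Sg cs])
| pow_repr_pred cs F : length cs = n -> pow_repr n F -> 0 < bin_val (bits n F) ->
    pow_repr n (VFun pow_pred [enc_list Sg cs; F]).

Definition reads_bits (n : nat) (F : val) : Prop :=
  forall i, A n i -> I n i < P n ->
  forall w, apply_val pow_prog F i w <-> w = enc_bool Sg (nth (I n i) (bits n F) false).

Section Counter.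
Variables (n : nat) (cs : list bool).
Hypothesis cs_len : length cs = n.
Local Notation c := (enc_list Sg cs).

Lemma old_args_over i : A n i -> Forall (val_over D) [c; i].
Proof. intros Hi. repeat constructor; [apply val_over_enc_list | exact (old_values_over Hi)]. Qed.

Lemma eval_old_zero_at g i :
  g 0 = c -> g 2 = i -> A n i -> evals_bool pow_prog g old_zero_at (I n i =? 0).
Proof.
  intros H0 H2 Hi y. unfold old_zero_at.
  rewrite eval_old_apps; simpl; rewrite ?H0, ?H2;
    [| apply old_syms_in_D | apply old_arities | apply old_args_over; auto].
  destruct (old_spec cs_len) as (_ & _ & Hzero). destruct (Hzero i Hi) as [Htrue Hfalse].
  destruct y; [rewrite Htrue | rewrite Hfalse];
    destruct (Nat.eqb_spec (I n i) 0); split; intros; (lia || congruence).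
Qed.

Lemma eval_old_pred_at g i :
  g 0 = c -> g 2 = i -> A n i -> 0 < I n i ->
  exists j, A n j /\ I n j = I n i - 1 /\ forall w, eval pow_prog g old_pred_at w <-> w = j.
Proof.
  intros H0 H2 Hi Hpos. destruct (old_spec cs_len) as (_ & Hpred & _).
  destruct (Hpred i Hi Hpos) as (j & Hcall & Huniq & Hj & HIj).
  exists j. split; [exact Hj | split; [exact HIj |]]. intros w. unfold old_pred_at.
  rewrite eval_old_apps; simpl; rewrite ?H0, ?H2;
    [| apply old_syms_in_D | exact (call_arity_ge Hcall) | apply old_args_over; auto].
  split; [apply Huniq | intros ->; exact Hcall].
Qed.

Lemma eval_old_seed_at g :
  g 0 = c -> exists s, A n s /\ I n s = P n - 1 /\ forall w, eval pow_prog g old_seed_at w <-> w = s.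
Proof.
  intros H0. destruct (old_spec cs_len) as ((s & Hcall & Huniq & Hs & HIs) & _).
  exists s. split; [exact Hs | split; [exact HIs |]]. intros w. unfold old_seed_at.
  rewrite eval_old_apps; simpl; rewrite ?H0;
    [| apply old_syms_in_D | apply old_arities | repeat constructor; apply val_over_enc_list].
  split; [apply Huniq | intros ->; exact Hcall].
Qed.

Lemma eval_read_bit F g i :
  reads_bits n F -> g 1 = F -> g 2 = i -> A n i -> I n i < P n ->
  forall w, eval pow_prog g read_bit w <-> w = enc_bool Sg (nth (I n i) (bits n F) false).
Proof.
  intros HF H1 H2 Hi Hlt w. unfold read_bit. rewrite eval_app_vars_iff, H1, H2. exact (HF i Hi Hlt w).
Qed.

Lemma eval_low_zero_at_pred F g i (b : bool) :
  g 0 = c -> g 1 = F -> g 2 = i -> A n i -> 0 < I n i ->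
  (forall j, A n j -> I n j = I n i - 1 ->
     forall w, call pow_prog pow_low_zero [c; F; j] w <-> w = enc_bool Sg b) ->
  forall w, eval pow_prog g (low_zero_at old_pred_at) w <-> w = enc_bool Sg b.
Proof.
  intros H0 H1 H2 Hi Hpos Hlow w.
  destruct (eval_old_pred_at H0 H2 Hi Hpos) as (j & Hj & HIj & Hpred).
  rewrite eval_low_zero_at, H0, H1, <- (Hlow j Hj HIj). split.
  - intros (v & Hv & Hc). apply Hpred in Hv. subst v. exact Hc.
  - intros Hc. exists j. split; [apply Hpred |]; auto.
Qed.

Lemma eval_low_zero_body F g i w :
  reads_bits n F -> g 0 = c -> g 1 = F -> g 2 = i -> A n i -> I n i < P n ->
  (0 < I n i -> forall j, A n j -> I n j = I n i - 1 -> forall w,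
     call pow_prog pow_low_zero [c; F; j] w <->
     w = enc_bool Sg (low_bits_zero (bits n F) (S (I n j)))) ->
  (eval pow_prog g (crhs pow_low_zero_clause) w <->
   w = enc_bool Sg (low_bits_zero (bits n F) (S (I n i)))).
Proof.
  intros HF H0 H1 H2 Hi Hlt IH. simpl crhs.
  rewrite (eval_if_iff _ _ _ (evals_bool_intro (eval_read_bit HF H1 H2 Hi Hlt))), low_bits_zero_S.
  destruct (nth (I n i) (bits n F) false); simpl.
  - rewrite andb_false_r. apply eval_ebool_iff.
  - rewrite andb_true_r, (eval_if_iff _ _ _ (eval_old_zero_at H0 H2 Hi)).
    destruct (Nat.eqb_spec (I n i) 0) as [Hz | Hnz].
    + rewrite Hz. apply eval_ebool_iff.
    + apply (eval_low_zero_at_pred H0 H1 H2 Hi ltac:(lia)). intros j Hj HIj w'.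
      rewrite (IH ltac:(lia) j Hj HIj). replace (S (I n j)) with (I n i) by lia. reflexivity.
Qed.

Lemma call_low_zero F : reads_bits n F ->
  forall i, A n i -> I n i < P n ->
  forall w, call pow_prog pow_low_zero [c; F; i] w <->
            w = enc_bool Sg (low_bits_zero (bits n F) (S (I n i))).
Proof.
  intros HF i. remember (I n i) as k eqn:Hk. revert i Hk.
  induction k as [k IH] using lt_wf_ind. intros i Hk Hi Hlt w.
  apply (call_pow_clause (cl := pow_low_zero_clause) (xs := [0; 1; 2]));
    [simpl; tauto | reflexivity | |].
  - exists (fun x => nth x [c; F; i] c). reflexivity.
  - intros g Hg. injection Hg as H0 H1 H2. subst k.
    apply eval_low_zero_body; auto. intros Hpos j Hj HIj. apply (IH (I n j)); auto; lia.
Qed.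

Lemma call_pow_pred F : reads_bits n F -> length (bits n F) = P n ->
  forall i, A n i -> I n i < P n ->
  forall w, call pow_prog pow_pred [c; F; i] w <->
            w = enc_bool Sg (nth (I n i) (bin_pred (bits n F)) false).
Proof.
  intros HF Hlen i Hi Hlt w. rewrite nth_bin_pred by lia.
  apply (call_pow_clause (cl := pow_pred_clause) (xs := [0; 1; 2])); [simpl; tauto | reflexivity | |].
  { exists (fun x => nth x [c; F; i] c). reflexivity. }
  intros g Hg. injection Hg as H0 H1 H2. simpl crhs.
  pose proof (eval_read_bit HF H1 H2 Hi Hlt) as Hread.
  rewrite (eval_if_iff _ _ _ (eval_old_zero_at H0 H2 Hi)).
  destruct (Nat.eqb_spec (I n i) 0) as [Hz | Hnz].
  - rewrite (eval_enot_iff _ (evals_bool_intro Hread)), Hz. reflexivity.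
  - assert (Hlow : evals_bool pow_prog g (low_zero_at old_pred_at) (low_bits_zero (bits n F) (I n i))).
    { apply evals_bool_intro, (eval_low_zero_at_pred H0 H1 H2 Hi ltac:(lia)). intros j Hj HIj w'.
      rewrite (call_low_zero HF Hj ltac:(lia)). replace (S (I n j)) with (I n i) by lia. reflexivity. }
    rewrite (eval_if_iff _ _ _ Hlow).
    destruct (low_bits_zero (bits n F) (I n i));
      [apply eval_enot_iff, evals_bool_intro | apply Hread]; auto.
Qed.

Lemma call_pow_zero F : reads_bits n F ->
  forall w, call pow_prog pow_zero [c; F] w <-> w = enc_bool Sg (low_bits_zero (bits n F) (P n)).
Proof.
  intros HF w.
  apply (call_pow_clause (cl := pow_zero_clause) (xs := [0; 1])); [simpl; tauto | reflexivity | |].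
  { exists (fun x => nth x [c; F] c). reflexivity. }
  intros g Hg. injection Hg as H0 H1. simpl crhs.
  destruct (eval_old_seed_at H0) as (s & Hs & HIs & Hseed).
  pose proof (P_pos n) as Hpos.
  replace (P n) with (S (I n s)) by lia.
  rewrite eval_low_zero_at, H0, H1, <- (call_low_zero HF Hs ltac:(lia)). split.
  - intros (v & Hv & Hc). apply Hseed in Hv. subst v. exact Hc.
  - intros Hc. exists s. split; [apply Hseed |]; auto.
Qed.

End Counter.

Lemma pow_clause_arity cl : In cl pow_clauses -> arity_ge pow_prog (chead cl) (length (cpats cl)).
Proof. intros H. exists cl. repeat split; auto. apply in_or_app. auto. Qed.

Lemma call_pow_partial cl vs w : In cl pow_clauses -> length vs < length (cpats cl) ->
  (call pow_prog (chead cl) vs w <-> w = VFun (chead cl) vs).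
Proof. intros H Hlt. exact (call_partial_iff w pow_prog_wf (pow_clause_arity H) Hlt). Qed.

Lemma pow_repr_bits_length n F : pow_repr n F -> length (bits n F) = P n.
Proof. induction 1; simpl; [apply repeat_length | rewrite length_bin_pred; auto]. Qed.

Lemma pow_repr_reads_bits n F : pow_repr n F -> reads_bits n F.
Proof.
  induction 1 as [cs Hcs | cs F Hcs HF IH Hpos]; intros i Hi Hlt w; rewrite apply_val_VFun; simpl app.
  - simpl bits. rewrite nth_repeat_lt by exact Hlt.
    apply (call_pow_clause (cl := pow_seed_clause) (xs := [0; 2])); [simpl; tauto | reflexivity | |].
    + exists (fun x => nth x [enc_list Sg cs; i; i] i). reflexivity.
    + intros g _. apply eval_ebool_iff.
  - apply (call_pow_pred Hcs IH (pow_repr_bits_length HF) Hi Hlt).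
Qed.

Lemma pow_repr_value n F : pow_repr n F ->
  is_value pow_prog F /\ val_type F pow_alpha /\ val_over pow_D F.
Proof.
  assert (Hsyms : forall f, In f pow_syms -> In f pow_D) by (intros; apply in_or_app; auto).
  assert (Hpartial : forall cl (vs : list val), In cl pow_clauses -> length vs < length (cpats cl) ->
                       below_arity pow_prog (chead cl) (length vs))
    by (intros cl vs H Hlt; exists cl; repeat split; auto; apply in_or_app; auto).
  induction 1 as [cs Hcs | cs F Hcs HF (IHv & IHt & IHo) Hpos]; split; [| split | | split].
  - apply V_fun; [repeat constructor; apply is_data_enc_list |].
    apply (Hpartial pow_seed_clause); simpl; auto.
  - apply VT_fun with (ts := [tl]); [reflexivity | repeat constructor; apply val_type_enc_list].
  - apply val_over_VFun. split; [apply Hsyms; simpl; auto | repeat constructor; apply val_over_enc_list].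
  - apply V_fun; [|apply (Hpartial pow_pred_clause); simpl; auto].
    constructor; [apply V_data, is_data_enc_list | constructor; [exact IHv | constructor]].
  - apply VT_fun with (ts := [tl; pow_alpha]); [reflexivity |].
    repeat constructor; auto. apply val_type_enc_list.
  - apply val_over_VFun. split; [apply Hsyms; simpl; auto |].
    repeat constructor; auto. apply val_over_enc_list.
Qed.

Definition pow_module : cmodule Sg :=
  CModule pow_alpha pow_D pow_seed pow_pred pow_zero pow_repr (fun n v => bin_val (bits n v)) pow_prog.

Lemma pow_zero_spec n cs v : length cs = n -> pow_repr n v ->
  (call pow_prog pow_zero [enc_list Sg cs; v] (enc_bool Sg true) <-> bin_val (bits n v) = 0) /\
  (call pow_prog pow_zero [enc_list Sg cs; v] (enc_bool Sg false) <-> 0 < bin_val (bits n v)).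
Proof.
  intros Hcs Hv.
  rewrite !(call_pow_zero Hcs (pow_repr_reads_bits Hv)), <- (pow_repr_bits_length Hv).
  rewrite low_bits_zero_length.
  destruct (Nat.eqb_spec (bin_val (bits n v)) 0) as [Hz | Hnz];
    split; split; intros H; auto; try lia; apply enc_bool_inj in H; discriminate.
Qed.

Lemma pow_clauses_over cl : In cl pow_prog ->
  In (chead cl) pow_D /\ forall f, sym_in f (crhs cl) -> In f pow_D.
Proof.
  intros H. apply in_app_iff in H as [H | H].
  - destruct (old_clauses_over H) as [Hh Hsyms]. split; [|intros f Hf]; apply in_or_app; auto.
  - split; [| intros f Hf; exact (plain_expr_sym_in (pow_clauses_plain H) Hf)].
    apply in_or_app. right. case_pow_clause H; simpl; auto.
Qed.

Theorem pow_module_counting : is_counting_module (fun n => 2 ^ P n) pow_module.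
Proof.
  assert (Hsyms : forall f, In f pow_syms -> In f pow_D) by (intros; apply in_or_app; auto).
  refine (conj _ (conj _ (conj _ (conj eq_refl (conj eq_refl (conj eq_refl
            (conj pow_prog_cons_free (conj pow_clauses_over (conj (@pow_repr_value) _)))))))));
    try (apply Hsyms; simpl; tauto).
  intros n cs Hcs. split; [|split].
  - exists (VFun pow_seed [enc_list Sg cs]).
    pose proof (call_pow_partial (cl := pow_seed_clause) (vs := [enc_list Sg cs])) as Hcall.
    split; [|split; [|split]].
    + apply Hcall; simpl; auto.
    + intros v' Hv'. apply Hcall in Hv'; simpl; auto.
    + constructor. exact Hcs.
    + apply bin_val_ones.
  - intros v Hv Hpos. exists (VFun pow_pred [enc_list Sg cs; v]).
    pose proof (call_pow_partial (cl := pow_pred_clause) (vs := [enc_list Sg cs; v])) as Hcall.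
    split; [|split; [|split]].
    + apply Hcall; simpl; auto.
    + intros v' Hv'. apply Hcall in Hv'; simpl; auto.
    + constructor; auto.
    + apply bin_val_pred. exact Hpos.
  - intros v Hv. exact (pow_zero_spec Hcs Hv).
Qed.

End Doubling.

Theorem lemma5 (Sg : signature) (P : nat -> nat) (K : nat) :
  (forall n, 0 < P n) ->
  (exists m : cmodule Sg, is_counting_module P m /\ module_data_order m K) ->
  exists m' : cmodule Sg,
    is_counting_module (fun n => 2 ^ P n) m' /\ module_data_order m' (K + 1).
Proof.
  intros P_pos (m & Hm & Hord). exists (pow_module P m). split.
  - exact (pow_module_counting P_pos Hm).
  - exact (pow_prog_data_order Hm Hord).
Qed.
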